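(* Let $E$ be a directed graph, let $R$ be a commutative ring with identity, and let $\{p_v, s_e, s_{e^*}\}$ be the universal generating Leavitt $E$-family in the Leavitt path algebra $L_R(E)$. Let $V\subset E^0$ and set \[ M:=\operatorname{span}_R\{s_{\mu}s_{\nu^*} :\mu,\nu\in E^*,\ r(\mu)\in V\},\qquad M^*:=\operatorname{span}_R\{s_{\mu}s_{\nu^*} :\mu,\nu\in E^*,\ r(\nu)\in V\}. \] Let $MM^*$ denote the $R$-span of all products $mn$ with $m\in M$, $n\in M^*$, and $M^*M$ the $R$-span of all products $nm$ with $n\in M^*$, $m\in M$ (products taken in $L_R(E)$). Then: (1) $MM^*$ is an $R$-subalgebra of $L_R(E)$; (2) $MM^*=\operatorname{span}_R\{s_\mu s_{\nu^*}:\mu,\nu\in E^*,\ r(\mu), r(\nu)\in V\}$, and $M^*M$ is a (two-sided) ideal of $L_R(E)$ containing $MM^*$; (3) with actions given by multiplication in $L_R(E)$, $M$ is an $MM^*$--$M^*M$-bimodule and $M^*$ is an $M^*M$--$MM^*$-bimodule; (4) there are bimodule homomorphisms $\Psi: M\otimes_{M^*M}M^*\to MM^*$ with $\Psi(m\otimes n)=mn$ and $\Phi: M^*\otimes_{MM^*}M\to M^*M$ with $\Phi(n\otimes m)=nm$ such that $(MM^*, M^*M, M, M^*, \Psi,\Phi)$ is a surjective Morita context; that is, $\Psi$ and $\Phi$ are surjective and $m\,\Phi(n\otimes m')=\Psi(m\otimes n)\,m'$ and $n\,\Psi(m\otimes n')=\Phi(n\otimes m)\,n'$ for all $m,m'\in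 M$, $n,n'\in M^*$.
   Context: A directed graph $E=(E^0,E^1,r,s)$ has countable vertex set $E^0$, countable edge set $E^1$ and range and source maps $r,s:E^1\to E^0$. A vertex $v$ is singular if $r^{-1}(v)$ is empty or infinite. A finite path is a finite sequence of edges $\mu=\mu_1\cdots\mu_n$ with $s(\mu_i)=r(\mu_{i+1})$; vertices are paths of length $0$; $E^*$ is the set of finite paths; $r(\mu)=r(\mu_1)$, $s(\mu)=s(\mu_n)$ (for a vertex $v$, $r(v)=s(v)=v$). For an $R$-algebra $A$, a Leavitt $E$-family in $A$ is a set $\{P_v,S_e,S_{e^*}: v\in E^0, e\in E^1\}\subset A$ with the $P_v$ mutually orthogonal idempotents and (L1) $P_{r(e)}S_e=S_e=S_eP_{s(e)}$, $P_{s(e)}S_{e^*}=S_{e^*}=S_{e^*}P_{r(e)}$; (L2) $S_{e^*}S_f=\delta_{e,f}P_{s(e)}$; (L3) $P_v=\sum_{r(e)=v}S_eS_{e^*}$ for every non-singular $v$. The Leavitt path algebra $L_R(E)$ is the universal $R$-algebra generated by a Leavitt $E$-family $\{p_v,s_e,s_{e^*}\}$. For $\mu=\mu_1\cdots\mu_n\in E^*$, $s_\mu=s_{\mu_1}\cdots s_{\mu_n}$ and $s_{\mu^*}=s_{\mu_n^*}\cdots s_{\mu_1^*}$, with $s_v=s_{v^*}=p_v$ for a vertex $v$. *)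

From HB Require Import structures.
From mathcomp Require Import all_boot all_algebra.
Set Implicit Arguments. Unset Strict Implicit. Unset Printing Implicit Defensive.
Import GRing.Theory.
Local Open Scope ring_scope.

(* (Possibly trivial) associative R-algebras.  MathComp's algType requires a *)
(* non-trivial ring, so an R-algebra is given here as a (pz) ring A together *)
(* with a scalar action sc : R -> A -> A satisfying the algebra axioms.      *)
Record is_Ralg (R : comPzRingType) (A : pzRingType) (sc : R -> A -> A) : Prop := {
  ralg_scale1 : forall x, sc 1 x = x;
  ralg_scaleA : forall a b x, sc a (sc b x) = sc (a * b) x;
  ralg_scaleDl : forall a b x, sc (a + b) x = sc a x + sc b x;
  ralg_scaleDr : forall a x y, sc a (x + y) = sc a x + sc a y;
  ralg_scaleAl : forall a x y, sc a (x * y) = sc a x * y;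
  ralg_scaleAr : forall a x y, sc a (x * y) = x * sc a y }.

Inductive rspan (R : comPzRingType) (A : pzRingType) (sc : R -> A -> A)
    (X : A -> Prop) : A -> Prop :=
  | rspan0 : rspan sc X 0
  | rspan_base x : X x -> rspan sc X x
  | rspanD x y : rspan sc X x -> rspan sc X y -> rspan sc X (x + y)
  | rspanZ a x : rspan sc X x -> rspan sc X (sc a x).

Definition prodspan (R : comPzRingType) (A : pzRingType) (sc : R -> A -> A)
    (X Y : A -> Prop) : A -> Prop :=
  rspan sc (fun z => exists x y, [/\ X x, Y y & z = x * y]).

Definition is_subalgebra_of (R : comPzRingType) (A : pzRingType)
    (sc : R -> A -> A) (L X : A -> Prop) : Prop :=
  [/\ forall x, X x -> L x, X 0,
      forall x y, X x -> X y -> X (x + y),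
      forall a x, X x -> X (sc a x) &
      forall x y, X x -> X y -> X (x * y)].

Definition is_ideal_of (R : comPzRingType) (A : pzRingType)
    (sc : R -> A -> A) (L X : A -> Prop) : Prop :=
  [/\ forall x, X x -> L x, X 0,
      forall x y, X x -> X y -> X (x + y),
      forall a x, X x -> X (sc a x) &
      forall x y, L x -> X y -> X (x * y) /\ X (y * x)].

(* rg = range map r, sr = source map s.                                     *)
Section Graph.
Variables (E0 E1 : countType) (rg sr : E1 -> E0).

(* Leavitt E-family in an R-algebra A.  (L3) is required for every          *)
(* non-singular vertex v, i.e. r^{-1}(v) finite and non-empty; s is then a   *)
(* duplicate-free enumeration of r^{-1}(v).                                  *)
Record leavitt_family (A : pzRingType) (P : E0 -> A) (S Ss : E1 -> A) : Prop := {
  lf_idem : forall v, P v * P v = P v;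
  lf_orth : forall v w, v != w -> P v * P w = 0;
  lf_L1a : forall e, P (rg e) * S e = S e;
  lf_L1b : forall e, S e * P (sr e) = S e;
  lf_L1c : forall e, P (sr e) * Ss e = Ss e;
  lf_L1d : forall e, Ss e * P (rg e) = Ss e;
  lf_L2 : forall e f, Ss e * S f = (if e == f then P (sr e) else 0);
  lf_L3 : forall (v : E0) (s : seq E1), uniq s -> s != [::] ->
            (forall e, (rg e == v) = (e \in s)) ->
            P v = \sum_(e <- s) S e * Ss e }.

(* Finite paths: a pair (v, es).  If es = [::] the path is the vertex v;     *)
(* otherwise es = mu_1 ... mu_n with s(mu_i) = r(mu_{i+1}) and v = r(mu_1).   *)
Definition fpath := (E0 * seq E1)%type.

Definition is_fpath (p : fpath) : bool :=
  match p.2 with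
  | [::] => true
  | e :: es => (p.1 == rg e) && path (fun a b => sr a == rg b) e es
  end.

Definition fpath_rg (p : fpath) : E0 := p.1.

Definition s_path (A : pzRingType) (P : E0 -> A) (S : E1 -> A) (p : fpath) : A :=
  if p.2 is [::] then P p.1 else \prod_(e <- p.2) S e.
Definition s_pathstar (A : pzRingType) (P : E0 -> A) (Ss : E1 -> A) (p : fpath) : A :=
  if p.2 is [::] then P p.1 else \prod_(e <- rev p.2) Ss e.

Inductive gen_alg (R : comPzRingType) (A : pzRingType) (sc : R -> A -> A)
    (P : E0 -> A) (S Ss : E1 -> A) : A -> Prop :=
  | gen_P v : gen_alg sc P S Ss (P v)
  | gen_S e : gen_alg sc P S Ss (S e)
  | gen_Ss e : gen_alg sc P S Ss (Ss e)
  | gen_0 : gen_alg sc P S Ss 0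
  | gen_D x y : gen_alg sc P S Ss x -> gen_alg sc P S Ss y -> gen_alg sc P S Ss (x + y)
  | gen_Z a x : gen_alg sc P S Ss x -> gen_alg sc P S Ss (sc a x)
  | gen_M x y : gen_alg sc P S Ss x -> gen_alg sc P S Ss y -> gen_alg sc P S Ss (x * y).

(* Universal property: the subalgebra generated by (P,S,Ss) inside A is the  *)
(* universal R-algebra generated by a Leavitt E-family, i.e. it is L_R(E)    *)
(* with its generators.  Targets B range over unital R-algebras, which       *)
(* suffices since every R-algebra embeds into its unitization.               *)
Definition leavitt_universal (R : comPzRingType) (A : pzRingType)
    (sc : R -> A -> A) (P : E0 -> A) (S Ss : E1 -> A) : Prop :=
  forall (B : pzRingType) (scB : R -> B -> B) (PB : E0 -> B) (SB SsB : E1 -> B),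
    is_Ralg scB -> leavitt_family PB SB SsB ->
    exists phi : A -> B,
      [/\ forall x y, gen_alg sc P S Ss x -> gen_alg sc P S Ss y ->
            phi (x + y) = phi x + phi y,
          forall a x, gen_alg sc P S Ss x -> phi (sc a x) = scB a (phi x),
          forall x y, gen_alg sc P S Ss x -> gen_alg sc P S Ss y ->
            phi (x * y) = phi x * phi y,
          forall v, phi (P v) = PB v &
          forall e, phi (S e) = SB e /\ phi (Ss e) = SsB e].

Definition mono_span (R : comPzRingType) (A : pzRingType) (sc : R -> A -> A)
    (P : E0 -> A) (S Ss : E1 -> A) (Q : fpath -> fpath -> Prop) : A -> Prop :=
  rspan sc (fun x => exists mu nu : fpath,
     [/\ is_fpath mu, is_fpath nu, Q mu nu & x = s_path P S mu * s_pathstar P Ss nu]).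

End Graph.

(* Tensor products M (x)_C N of R-modules M, N (subsets of A) balanced over  *)
(* C (a subset of A acting by multiplication), given by the universal       *)
(* property: t : A -> A -> T is R-bilinear and C-balanced on M x N, and     *)
(* every such map factors uniquely through an R-linear map on T.            *)
Definition balanced_bilinear (R : comPzRingType) (A : pzRingType)
    (sc : R -> A -> A) (M N C : A -> Prop) (W : lmodType R) (f : A -> A -> W) : Prop :=
  [/\ forall m m' n, M m -> M m' -> N n -> f (m + m') n = f m n + f m' n,
      forall m n n', M m -> N n -> N n' -> f m (n + n') = f m n + f m n',
      forall a m n, M m -> N n -> f (sc a m) n = a *: f m n,
      forall a m n, M m -> N n -> f m (sc a n) = a *: f m n &
      forall m c n, M m -> C c -> N n -> f (m * c) n = f m (c * n)].

Definition is_tensor_product (R : comPzRingType) (A : pzRingType)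
    (sc : R -> A -> A) (M N C : A -> Prop) (T : lmodType R) (t : A -> A -> T) : Prop :=
  balanced_bilinear sc M N C t /\
  forall (W : lmodType R) (f : A -> A -> W), balanced_bilinear sc M N C f ->
    exists g : T -> W,
      [/\ forall x y, g (x + y) = g x + g y,
          forall a x, g (a *: x) = a *: g x,
          forall m n, M m -> N n -> g (t m n) = f m n &
          forall g' : T -> W, (forall x y, g' (x + y) = g' x + g' y) ->
            (forall a x, g' (a *: x) = a *: g' x) ->
            (forall m n, M m -> N n -> g' (t m n) = f m n) -> g' =1 g].

(* Everything rests on one computation with the Leavitt relations (L1), (L2):
   a product of monomials s_p s_q^* . s_a s_b^* is either 0 or a monomial
   s_p' s_b'^* with r(p') = r(p) and r(b') = r(b), because s_q^* s_a collapses
   to 0, to some s_c or to some s_d^*.  Hence spans of monomials whose ranges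
   are constrained on the left (resp. right) are right (resp. left) ideals of
   L_R(E) = span of all monomials, and s_mu s_nu^* = s_mu s_nu^* p_r(nu)
   = p_r(mu) s_mu s_nu^* with p_v in M^* for v in V identifies MM^* and places
   it inside M^*M.  The maps Psi and Phi are induced by multiplication; they
   land in MM^* and M^*M because a linear map out of a tensor product is
   determined by its values on pure tensors, which we exploit by mapping into
   the quotient module by the target span. *)
From Pilot Require Import Defs.
From HB Require Import structures.
From mathcomp Require Import all_boot all_algebra.
From mathcomp Require Import boolp.
Set Implicit Arguments. Unset Strict Implicit. Unset Printing Implicit Defensive.
Import GRing.Theory.
Local Open Scope ring_scope.

Section RalgLmodule.
Variables (R : comPzRingType) (A : pzRingType) (sc : R -> A -> A).

(* A copy of A indexed by the algebra axioms, so that it can carry the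
   lmodType structure given by sc. *)
Definition ralg_lmod (_ : is_Ralg sc) : Type := A.

Variable hA : is_Ralg sc.
HB.instance Definition _ := GRing.Zmodule.on (ralg_lmod hA).

Lemma ralg_lmod_scalerA a b (x : ralg_lmod hA) : sc a (sc b x) = sc (a * b) x.
Proof. by case: hA. Qed.
Lemma ralg_lmod_scale1r : left_id 1 (sc : R -> ralg_lmod hA -> ralg_lmod hA).
Proof. by case: hA. Qed.
Lemma ralg_lmod_scalerDr : right_distributive (sc : R -> ralg_lmod hA -> ralg_lmod hA) +%R.
Proof. by case: hA. Qed.
Lemma ralg_lmod_scalerDl (x : ralg_lmod hA) :
  {morph (sc^~ x : R -> ralg_lmod hA) : a b / a + b}.
Proof. by move=> a b; case: hA. Qed.
HB.instance Definition _ := GRing.Zmodule_isLmodule.Build R (ralg_lmod hA)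
  ralg_lmod_scalerA ralg_lmod_scale1r ralg_lmod_scalerDr ralg_lmod_scalerDl.

End RalgLmodule.

Record submodule (R : pzRingType) (U : lmodType R) := Submodule {
  submod_pred :> U -> Prop;
  submod0 : submod_pred 0;
  submodD : forall x y, submod_pred x -> submod_pred y -> submod_pred (x + y);
  submodZ : forall a x, submod_pred x -> submod_pred (a *: x) }.

Section Quotient.
Variables (R : pzRingType) (U : lmodType R) (X : submodule U).

Lemma submodN x : X x -> X (- x).
Proof. by rewrite -scaleN1r; apply: submodZ. Qed.

(* Cosets are represented extensionally, as predicates on U, so that no
   decidability of X is required. *)
Definition quot := {C : U -> Prop | exists x, C = fun y => X (y - x)}.
HB.instance Definition _ := gen_eqMixin quot.
HB.instance Definition _ := gen_choiceMixin quot.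

Definition coset (x : U) : quot := exist _ (fun y => X (y - x)) (ex_intro _ x erefl).
Definition coset_repr (C : quot) : U := projT1 (cid (proj2_sig C)).

Lemma coset_reprK C : coset (coset_repr C) = C.
Proof.
case: C => C hC; rewrite /coset_repr /=; case: (cid _) => x /= hx.
exact: eq_exist (esym hx).
Qed.

Lemma eq_coset x y : coset x = coset y <-> X (x - y).
Proof.
split=> [/(congr1 (@proj1_sig _ _)) /= /(congr1 (fun C => C x)) <-|hxy].
  by rewrite subrr; apply: submod0.
apply: eq_exist; apply: funext => z; apply: propext; split=> hz.
  by have := submodD hz hxy; rewrite addrA subrK.
by have := submodD hz (submodN hxy); rewrite opprB addrA subrK.
Qed.

Lemma coset_reprE x : X (coset_repr (coset x) - x).
Proof. by apply/eq_coset; rewrite coset_reprK. Qed.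

Lemma coset_ind (Q : quot -> Prop) : (forall x, Q (coset x)) -> forall C, Q C.
Proof. by move=> hQ C; rewrite -(coset_reprK C). Qed.

Definition qadd C D := coset (coset_repr C + coset_repr D).
Definition qopp C := coset (- coset_repr C).
Definition qscale a C := coset (a *: coset_repr C).

Lemma qaddE x y : qadd (coset x) (coset y) = coset (x + y).
Proof.
apply/eq_coset; rewrite opprD addrACA.
exact: submodD (coset_reprE x) (coset_reprE y).
Qed.

Lemma qoppE x : qopp (coset x) = coset (- x).
Proof. by apply/eq_coset; rewrite -opprD; apply/submodN/coset_reprE. Qed.

Lemma qscaleE a x : qscale a (coset x) = coset (a *: x).
Proof. by apply/eq_coset; rewrite -scalerBr; apply/submodZ/coset_reprE. Qed.

Lemma qaddA : associative qadd.
Proof. by do 3!elim/coset_ind=> ?; rewrite !qaddE addrA. Qed.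
Lemma qaddC : commutative qadd.
Proof. by do 2!elim/coset_ind=> ?; rewrite !qaddE addrC. Qed.
Lemma qadd0 : left_id (coset 0) qadd.
Proof. by elim/coset_ind=> x; rewrite qaddE add0r. Qed.
Lemma qaddN : left_inverse (coset 0) qopp qadd.
Proof. by elim/coset_ind=> x; rewrite qoppE qaddE addNr. Qed.
HB.instance Definition _ := GRing.isZmodule.Build quot qaddA qaddC qadd0 qaddN.

Lemma coset_add x y : coset x + coset y = coset (x + y). Proof. exact: qaddE. Qed.

Lemma qscaleA a b C : qscale a (qscale b C) = qscale (a * b) C.
Proof. by elim/coset_ind: C => x; rewrite !qscaleE scalerA. Qed.
Lemma qscale1 : left_id 1 qscale.
Proof. by elim/coset_ind=> x; rewrite qscaleE scale1r. Qed.
Lemma qscaleDr : right_distributive qscale +%R.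
Proof.
by move=> a; do 2!elim/coset_ind=> ?; rewrite coset_add !qscaleE coset_add scalerDr.
Qed.
Lemma qscaleDl C : {morph qscale^~ C : a b / a + b}.
Proof. by elim/coset_ind: C => x a b; rewrite !qscaleE coset_add scalerDl. Qed.
HB.instance Definition _ :=
  GRing.Zmodule_isLmodule.Build R quot qscaleA qscale1 qscaleDr qscaleDl.

Lemma coset_scale a x : a *: coset x = coset (a *: x). Proof. exact: qscaleE. Qed.

End Quotient.

Lemma tensor_image_submod (R : comPzRingType) (U : lmodType R) (X : submodule U)
    (A : pzRingType) (sc : R -> A -> A) (M N C : A -> Prop)
    (T : lmodType R) (t : A -> A -> T) (g : T -> U) :
  is_tensor_product sc M N C t ->
  (forall x y, g (x + y) = g x + g y) -> (forall a x, g (a *: x) = a *: g x) ->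
  (forall m n, M m -> N n -> X (g (t m n))) -> forall y, X (g y).
Proof.
move=> [_ huniv] gD gZ gX y.
have zero_bal : balanced_bilinear sc M N C (fun _ _ => 0 : quot X).
  by split=> *; rewrite ?addr0 ?scaler0.
have [h [_ _ _ h_uniq]] := huniv _ _ zero_bal.
have h0 : (fun _ => 0 : quot X) =1 h.
  by apply: h_uniq => *; rewrite ?addr0 ?scaler0.
have hg : (fun z => coset X (g z)) =1 h.
  apply: h_uniq => [z w|a z|m n hm hn]; first by rewrite gD coset_add.
    by rewrite gZ coset_scale.
  by apply/eq_coset; rewrite subr0; apply: gX.
have /eq_coset : coset X (g y) = coset X 0 by rewrite hg -h0.
by rewrite subr0.
Qed.

Section RSpan.
Variables (R : comPzRingType) (A : pzRingType) (sc : R -> A -> A).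

Lemma rspan_ind (X Z : A -> Prop) : Z 0 -> (forall x y, Z x -> Z y -> Z (x + y)) ->
  (forall a x, Z x -> Z (sc a x)) -> (forall x, X x -> Z x) ->
  forall x, rspan sc X x -> Z x.
Proof. by move=> Z0 ZD ZZ ZX x; elim=> //; auto. Qed.

Lemma rspan_sub (X Y : A -> Prop) :
  (forall x, X x -> rspan sc Y x) -> forall x, rspan sc X x -> rspan sc Y x.
Proof. by apply: rspan_ind; [exact: rspan0|exact: rspanD|exact: rspanZ]. Qed.

Variable hA : is_Ralg sc.

Lemma rspan_mul (X Y Z : A -> Prop) : Z 0 -> (forall x y, Z x -> Z y -> Z (x + y)) ->
  (forall a x, Z x -> Z (sc a x)) -> (forall x y, X x -> Y y -> Z (x * y)) ->
  forall x y, rspan sc X x -> rspan sc Y y -> Z (x * y).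
Proof.
move=> Z0 ZD ZZ ZXY x y hx hy; elim: hx => [|x0 hx0|x1 x2 _ h1 _ h2|a x0 _ h].
- by rewrite mul0r.
- elim: hy => [|y0 hy0|y1 y2 _ h1 _ h2|a y0 _ h]; first by rewrite mulr0.
  + exact: ZXY.
  + by rewrite mulrDr; apply: ZD.
  + by rewrite -(ralg_scaleAr hA); apply: ZZ.
- by rewrite mulrDl; apply: ZD.
- by rewrite -(ralg_scaleAl hA); apply: ZZ.
Qed.

Definition rspan_submod (X : A -> Prop) : submodule (ralg_lmod hA) :=
  @Submodule _ (ralg_lmod hA) (rspan sc X)
    (rspan0 sc X) (@rspanD _ _ sc X) (@rspanZ _ _ sc X).

Lemma tensor_mul_map (M N C : A -> Prop) (T : lmodType R) (t : A -> A -> T) :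
  is_tensor_product sc M N C t ->
  exists Psi : T -> A,
    [/\ forall x y, Psi (x + y) = Psi x + Psi y,
        forall a x, Psi (a *: x) = sc a (Psi x),
        forall m n, M m -> N n -> Psi (t m n) = m * n &
        forall x, prodspan sc M N x <-> exists y, Psi y = x].
Proof.
move=> ht.
have mul_bal : balanced_bilinear sc M N C (fun m n => m * n : ralg_lmod hA).
  split=> *; by rewrite ?mulrDl ?mulrDr ?mulrA -?(ralg_scaleAl hA) -?(ralg_scaleAr hA).
have [Psi [PsiD PsiZ Psi_t _]] := ht.2 _ _ mul_bal.
exists Psi; split=> // x; split=> [|[y <-]].
  elim=> [|_ [m [n [hm hn ->]]]|_ _ _ [y1 <-] _ [y2 <-]|a _ _ [y <-]].
  - by exists 0; apply: (addrI (Psi 0)); rewrite -PsiD !addr0.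
  - by exists (t m n); rewrite Psi_t.
  - by exists (y1 + y2); rewrite PsiD.
  - by exists (a *: y); rewrite PsiZ.
apply: (tensor_image_submod (X := rspan_submod _) ht PsiD PsiZ) => m n hm hn.
by rewrite Psi_t //; apply: rspan_base; exists m, n.
Qed.

Lemma prodspan_mull (X Y : A -> Prop) c :
  (forall x, X x -> X (c * x)) -> forall z, prodspan sc X Y z -> prodspan sc X Y (c * z).
Proof.
move=> hX z; elim=> [|_ [x [y [hx hy ->]]]|z1 z2 _ h1 _ h2|a z0 _ h].
- by rewrite mulr0; apply: rspan0.
- by rewrite mulrA; apply: rspan_base; exists (c * x), y; split=> //; apply: hX.
- by rewrite mulrDr; apply: rspanD.
- by rewrite -(ralg_scaleAr hA); apply: rspanZ.
Qed.

Lemma prodspan_mulr (X Y : A -> Prop) c :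
  (forall y, Y y -> Y (y * c)) -> forall z, prodspan sc X Y z -> prodspan sc X Y (z * c).
Proof.
move=> hY z; elim=> [|_ [x [y [hx hy ->]]]|z1 z2 _ h1 _ h2|a z0 _ h].
- by rewrite mul0r; apply: rspan0.
- by rewrite -mulrA; apply: rspan_base; exists x, (y * c); split=> //; apply: hY.
- by rewrite mulrDl; apply: rspanD.
- by rewrite -(ralg_scaleAl hA); apply: rspanZ.
Qed.

End RSpan.

Section LeavittMonomials.
Variables (E0 E1 : countType) (rg sr : E1 -> E0).
Variables (A : pzRingType) (P : E0 -> A) (S Ss : E1 -> A).
Hypothesis hf : leavitt_family rg sr P S Ss.
Local Notation valid := (is_fpath rg sr).

Definition s_edges (es : seq E1) : A := \prod_(e <- es) S e.
Definition s_edges_star (es : seq E1) : A := \prod_(e <- rev es) Ss e.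
Definition fpath_sr (p : Defs.fpath E0 E1) : E0 := last p.1 (map sr p.2).

(* Anchoring the edge products at the range vertex treats vertex paths and
   proper paths uniformly. *)
Definition s_path_at (p : Defs.fpath E0 E1) : A := P p.1 * s_edges p.2.
Definition s_pathstar_at (p : Defs.fpath E0 E1) : A := s_edges_star p.2 * P p.1.

Definition monomial (p q : Defs.fpath E0 E1) : A := s_path P S p * s_pathstar P Ss q.

Lemma s_edges_cons e es : s_edges (e :: es) = S e * s_edges es.
Proof. by rewrite /s_edges big_cons. Qed.
Lemma s_edges_star_cons e es : s_edges_star (e :: es) = s_edges_star es * Ss e.
Proof. by rewrite /s_edges_star rev_cons big_rcons. Qed.
Lemma s_edges_cat es fs : s_edges (es ++ fs) = s_edges es * s_edges fs.
Proof. by rewrite /s_edges big_cat. Qed.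
Lemma s_edges_star_cat es fs : s_edges_star (es ++ fs) = s_edges_star fs * s_edges_star es.
Proof. by rewrite /s_edges_star rev_cat big_cat. Qed.

Lemma mulP v w : P v * P w = if v == w then P v else 0.
Proof. by case: eqVneq => [->|/(lf_orth hf)]; first exact: (lf_idem hf). Qed.

Lemma is_fpath_cons v e es : valid (v, e :: es) -> valid (sr e, es) /\ v = rg e.
Proof. by rewrite /is_fpath /= => /andP [/eqP -> h]; case: es h. Qed.

Lemma is_fpath_cat p c :
  valid p -> valid c -> c.1 = fpath_sr p -> valid (p.1, p.2 ++ c.2).
Proof.
case: p c => v [|e es] [w fs] /=; first by rewrite /fpath_sr /= => _ + <-.
rewrite /is_fpath /fpath_sr /= => /andP [-> hp] hw hs.
rewrite cat_path hp /=; case: fs hw => [|f fs] //= /andP [/eqP hw ->].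
by rewrite -hw hs (last_map sr) eqxx.
Qed.

Lemma s_pathE p : valid p -> s_path P S p = s_path_at p.
Proof.
case: p => v [|e es]; rewrite /s_path /s_path_at /=.
  by rewrite /s_edges big_nil mulr1.
by move=> /is_fpath_cons [_ ->]; rewrite -/(s_edges _) s_edges_cons mulrA (lf_L1a hf).
Qed.

Lemma s_pathstarE p : valid p -> s_pathstar P Ss p = s_pathstar_at p.
Proof.
case: p => v [|e es]; rewrite /s_pathstar /s_pathstar_at /=.
  by rewrite /s_edges_star big_nil mul1r.
move=> /is_fpath_cons [_ ->].
by rewrite -/(s_edges_star _) s_edges_star_cons -mulrA (lf_L1d hf).
Qed.

Lemma s_path_at_mulP p w : valid p ->
  s_path_at p * P w = if w == fpath_sr p then s_path_at p else 0.
Proof.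
case: p => v es; rewrite /s_path_at /=; elim: es v => [|e es IH] v.
  by rewrite /s_edges big_nil mulr1 mulP eq_sym.
move=> /is_fpath_cons [/IH {}IH ->].
have shift Y : P (rg e) * s_edges (e :: es) * Y = S e * (P (sr e) * s_edges es * Y).
  by rewrite s_edges_cons !mulrA (lf_L1a hf) (lf_L1b hf).
rewrite shift IH /fpath_sr /=; case: eqP => _; last by rewrite mulr0.
by rewrite -[RHS]mulr1 shift mulr1.
Qed.

Lemma mulP_s_pathstar_at w q : valid q ->
  P w * s_pathstar_at q = if w == fpath_sr q then s_pathstar_at q else 0.
Proof.
case: q => v es; rewrite /s_pathstar_at /=; elim: es v => [|e es IH] v.
  by rewrite /s_edges_star /fpath_sr big_nil !mul1r mulP; case: eqP => [->|].
move=> /is_fpath_cons [/IH {}IH ->].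
have shift Y : Y * (s_edges_star (e :: es) * P (rg e)) = Y * (s_edges_star es * P (sr e)) * Ss e.
  by rewrite s_edges_star_cons -!mulrA (lf_L1d hf) (lf_L1c hf).
rewrite shift IH /fpath_sr /=; case: eqP => _; last by rewrite mul0r.
by rewrite -[RHS]mul1r shift mul1r.
Qed.

Lemma s_path_at_mul p c : valid p ->
  s_path_at p * s_path_at c =
  if c.1 == fpath_sr p then s_path_at (p.1, p.2 ++ c.2) else 0.
Proof.
move=> hp; rewrite [s_path_at c]/s_path_at mulrA s_path_at_mulP //.
by case: eqP => _; rewrite ?mul0r // /s_path_at s_edges_cat mulrA.
Qed.

Lemma s_pathstar_at_mul d b : valid b ->
  s_pathstar_at d * s_pathstar_at b =
  if d.1 == fpath_sr b then s_pathstar_at (b.1, b.2 ++ d.2) else 0.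
Proof.
move=> hb; rewrite [s_pathstar_at d]/s_pathstar_at -mulrA mulP_s_pathstar_at //.
by case: eqP => _; rewrite ?mulr0 // /s_pathstar_at s_edges_star_cat mulrA.
Qed.

(* (L2) cancels the matching leading edges of q and a; once one of them is
   exhausted what remains is a path or a ghost path, and a mismatch gives 0. *)
Lemma s_pathstar_at_mul_path_at q a : valid q -> valid a ->
  let x := s_pathstar_at q * s_path_at a in
  [\/ x = 0, exists2 c, valid c & x = s_path_at c
           | exists2 d, valid d & x = s_pathstar_at d].
Proof.
case: q a => v qs [w as_]; rewrite /s_pathstar_at /s_path_at /= => hq ha; cbv zeta.
elim: qs v w as_ hq ha => [|e qs IH] v w as_ hq ha.
  rewrite /s_edges_star big_nil mul1r mulrA mulP.
  by case: eqP => [->|_]; [apply: Or32; exists (w, as_)|apply: Or31; rewrite mul0r].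
rewrite -mulrA [P v * _]mulrA mulP.
case: eqP => [hvw|_]; last by apply: Or31; rewrite mul0r mulr0.
subst w; have [hq' _] := is_fpath_cons hq.
case: as_ ha => [|f as_] ha.
  by apply: Or33; exists (v, e :: qs); rewrite // /s_edges big_nil !mulr1.
have [ha' hvf] := is_fpath_cons ha.
rewrite hvf s_edges_cons [P _ * (S f * _)]mulrA (lf_L1a hf) s_edges_star_cons mulrA.
rewrite -[_ * Ss e * S f]mulrA (lf_L2 hf).
case: eqP => [hef|_]; last by apply: Or31; rewrite mulr0 mul0r.
subst f.
have -> : s_edges_star qs * P (sr e) * s_edges as_ =
          s_edges_star qs * P (sr e) * (P (sr e) * s_edges as_).
  by rewrite mulrA -[_ * P _ * P _]mulrA (lf_idem hf).
exact: IH.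
Qed.

Lemma monomial_mul p q a b : valid p -> valid q -> valid a -> valid b ->
  monomial p q * monomial a b = 0 \/
  exists p' b', [/\ valid p', valid b', p'.1 = p.1, b'.1 = b.1 &
    monomial p q * monomial a b = monomial p' b'].
Proof.
move=> hp hq ha hb; rewrite /monomial !s_pathE // !s_pathstarE //.
rewrite mulrA -[_ * s_pathstar_at q * _]mulrA.
have [->|[c hc ->]|[d hd ->]] := s_pathstar_at_mul_path_at hq ha.
- by left; rewrite mulr0 mul0r.
- rewrite s_path_at_mul //; case: eqP => [hpc|_]; last by left; rewrite !mul0r.
  have hpc' := is_fpath_cat hp hc hpc.
  by right; exists (p.1, p.2 ++ c.2), b; rewrite s_pathE ?s_pathstarE.
- rewrite -mulrA s_pathstar_at_mul //; case: eqP => [hdb|_]; last by left; rewrite !mulr0.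
  have hdb' := is_fpath_cat hb hd hdb.
  by right; exists p, (b.1, b.2 ++ d.2); rewrite s_pathE ?s_pathstarE.
Qed.

End LeavittMonomials.

Section MonomialSpans.
Variables (R : comPzRingType) (E0 E1 : countType) (rg sr : E1 -> E0).
Variables (A : pzRingType) (sc : R -> A -> A) (P : E0 -> A) (S Ss : E1 -> A).
Hypotheses (hA : is_Ralg sc) (hf : leavitt_family rg sr P S Ss).
Local Notation span := (mono_span rg sr sc P S Ss).
Local Notation L := (gen_alg sc P S Ss).
Local Notation fpathT := (Defs.fpath E0 E1).

Lemma mono_span_mul (Q1 Q2 Q3 : fpathT -> fpathT -> Prop) :
  (forall p q a b p' b', Q1 p q -> Q2 a b ->
     fpath_rg p' = fpath_rg p -> fpath_rg b' = fpath_rg b -> Q3 p' b') ->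
  forall x y, span Q1 x -> span Q2 y -> span Q3 (x * y).
Proof.
move=> hQ; apply: (rspan_mul hA); [exact: rspan0|exact: rspanD|exact: rspanZ|].
move=> _ _ [p [q [hp hq h1 ->]]] [a [b [ha hb h2 ->]]].
have [->|[p' [b' [hp' hb' e1 e2 ->]]]] := monomial_mul hf hp hq ha hb.
  exact: rspan0.
by apply: rspan_base; exists p', b'; split=> //; apply: hQ h1 h2 e1 e2.
Qed.

Lemma P_monomial v : P v = monomial P S Ss (v, [::]) (v, [::]).
Proof. by rewrite /monomial /s_path /s_pathstar /= (lf_idem hf). Qed.

Lemma monomial_mulP p q :
  is_fpath rg sr q -> monomial P S Ss p q * P q.1 = monomial P S Ss p q.
Proof.
by move=> hq; rewrite /monomial (s_pathstarE hf) // /s_pathstar_at -!mulrA (lf_idem hf).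
Qed.

Lemma mulP_monomial p q :
  is_fpath rg sr p -> P p.1 * monomial P S Ss p q = monomial P S Ss p q.
Proof. by move=> hp; rewrite /monomial (s_pathE hf) // /s_path_at !mulrA (lf_idem hf). Qed.

Lemma gen_alg_prod (F : E1 -> A) : (forall e, L (F e)) ->
  forall s, s != [::] -> L (\prod_(e <- s) F e).
Proof.
move=> hF; elim=> [//|e [|f s] IH] _; rewrite big_cons.
  by rewrite big_nil mulr1.
exact: gen_M (hF e) (IH _).
Qed.

Lemma mono_span_gen_alg Q x : span Q x -> L x.
Proof.
apply: rspan_ind; [exact: gen_0|exact: gen_D|exact: gen_Z|].
move=> _ [[v es] [[w fs] [_ _ _ ->]]]; apply: gen_M.
  case: es => [|e es]; first exact: gen_P.
  by apply: gen_alg_prod => // f; apply: gen_S.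
case: fs => [|f fs]; first exact: gen_P.
by apply: gen_alg_prod => [e|]; [apply: gen_Ss|rewrite rev_cons; case: rev].
Qed.

Lemma gen_alg_mono_span x : L x -> span (fun _ _ => True) x.
Proof.
have edge e : is_fpath rg sr (rg e, [:: e]) by rewrite /is_fpath /= eqxx.
elim=> [v|e|e| |x1 x2 _ h1 _ h2|a x0 _ h|x1 x2 _ h1 _ h2].
- by apply: rspan_base; exists (v, [::]), (v, [::]); split=> //; exact: P_monomial.
- apply: rspan_base; exists (rg e, [:: e]), (sr e, [::]); split=> //.
  by rewrite /s_path /s_pathstar /= big_seq1 (lf_L1b hf).
- apply: rspan_base; exists (sr e, [::]), (rg e, [:: e]); split=> //.
  by rewrite /s_path /s_pathstar /= big_seq1 (lf_L1c hf).
- exact: rspan0.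
- exact: rspanD.
- exact: rspanZ.
- exact: mono_span_mul h1 h2.
Qed.

End MonomialSpans.

Section MoritaContext.
Variables (R : comPzRingType) (E0 E1 : countType) (rg sr : E1 -> E0).
Variables (A : pzRingType) (sc : R -> A -> A) (P : E0 -> A) (S Ss : E1 -> A).
Variable V : E0 -> Prop.
Hypotheses (hA : is_Ralg sc) (hf : leavitt_family rg sr P S Ss).
Local Notation L := (gen_alg sc P S Ss).
Local Notation span := (mono_span rg sr sc P S Ss).
Local Notation M := (span (fun mu nu => V (fpath_rg mu))).
Local Notation Ms := (span (fun mu nu => V (fpath_rg nu))).
Local Notation MV := (span (fun mu nu => V (fpath_rg mu) /\ V (fpath_rg nu))).
Local Notation MMs := (prodspan sc M Ms).
Local Notation MsM := (prodspan sc Ms M).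

Lemma M_mul_gen_alg x y : M x -> L y -> M (x * y).
Proof.
move=> hx /(gen_alg_mono_span hA hf); move: hx.
by apply: (mono_span_mul hA hf) => p q a b p' b' hp _ ->.
Qed.

Lemma gen_alg_mul_Ms x y : L x -> Ms y -> Ms (x * y).
Proof.
move=> /(gen_alg_mono_span hA hf).
by apply: (mono_span_mul hA hf) => p q a b p' b' _ hb _ ->.
Qed.

Lemma M_mul_Ms x y : M x -> Ms y -> MV (x * y).
Proof. by apply: (mono_span_mul hA hf) => p q a b p' b' hp hb -> ->. Qed.

Lemma P_Ms v : V v -> Ms (P v).
Proof.
by move=> hv; apply: rspan_base; exists (v, [::]), (v, [::]); split=> //; apply: (P_monomial hf).
Qed.

Lemma MMsE x : MMs x <-> MV x.
Proof.
split; first by apply: rspan_sub => _ [m [n [hm hn ->]]]; apply: M_mul_Ms.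
apply: rspan_sub => _ [mu [nu [hmu hnu [hVmu hVnu] ->]]].
apply: rspan_base; exists (monomial P S Ss mu nu), (P nu.1).
split; [|exact: P_Ms|by rewrite (monomial_mulP hf)].
by apply: rspan_base; exists mu, nu.
Qed.

Lemma MMs_gen_alg x : MMs x -> L x.
Proof. by move/MMsE; apply: mono_span_gen_alg. Qed.

Lemma MsM_gen_alg x : MsM x -> L x.
Proof.
apply: rspan_ind; [exact: gen_0|exact: gen_D|exact: gen_Z|].
by move=> _ [n [m [/mono_span_gen_alg hn /mono_span_gen_alg hm ->]]]; apply: gen_M.
Qed.

Lemma MMs_mul_M x y : MMs x -> M y -> M (x * y).
Proof.
move=> /MMsE hx hy; move: hx hy.
by apply: (mono_span_mul hA hf) => p q a b p' b' [hp _] _ ->.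
Qed.

Lemma Ms_mul_MMs x y : Ms x -> MMs y -> Ms (x * y).
Proof.
move=> hx /MMsE hy; move: hx hy.
by apply: (mono_span_mul hA hf) => p q a b p' b' _ [_ hb] _ ->.
Qed.

Lemma M_mul_MsM x y : M x -> MsM y -> M (x * y).
Proof. by move=> hx /MsM_gen_alg; apply: M_mul_gen_alg. Qed.

Lemma MsM_mul_Ms x y : MsM x -> Ms y -> Ms (x * y).
Proof. by move=> /MsM_gen_alg; apply: gen_alg_mul_Ms. Qed.

Lemma MMs_subalgebra : is_subalgebra_of sc L MMs.
Proof.
split; [exact: MMs_gen_alg|exact: rspan0|exact: rspanD|exact: rspanZ|].
move=> x y /MMsE hx /MMsE hy; apply/MMsE; move: hx hy.
by apply: (mono_span_mul hA hf) => p q a b p' b' [hp _] [_ hb] -> ->.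
Qed.

Lemma MsM_ideal : is_ideal_of sc L MsM.
Proof.
split; [exact: MsM_gen_alg|exact: rspan0|exact: rspanD|exact: rspanZ|].
move=> x y hx hy; split.
  by apply: (prodspan_mull hA) hy => n; apply: gen_alg_mul_Ms.
by apply: (prodspan_mulr hA) hy => m hm; apply: M_mul_gen_alg.
Qed.

Lemma MMs_sub_MsM x : MMs x -> MsM x.
Proof.
move/MMsE; apply: rspan_sub => _ [mu [nu [hmu hnu [hVmu hVnu] ->]]].
apply: rspan_base; exists (P mu.1), (monomial P S Ss mu nu).
split; [exact: P_Ms| |by rewrite (mulP_monomial hf)].
by apply: rspan_base; exists mu, nu.
Qed.

End MoritaContext.

Theorem theorem3p1
  (R : comPzRingType) (E0 E1 : countType) (rg sr : E1 -> E0)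
  (A : pzRingType) (sc : R -> A -> A) (P : E0 -> A) (S Ss : E1 -> A)
  (hA : is_Ralg sc) (hfam : leavitt_family rg sr P S Ss)
  (huniv : leavitt_universal rg sr sc P S Ss)
  (V : E0 -> Prop) :
  let L := gen_alg sc P S Ss in
  let M := mono_span rg sr sc P S Ss (fun mu nu => V (fpath_rg mu)) in
  let Ms := mono_span rg sr sc P S Ss (fun mu nu => V (fpath_rg nu)) in
  let MMs := prodspan sc M Ms in
  let MsM := prodspan sc Ms M in
  (* (1) *)
  is_subalgebra_of sc L MMs /\
  (* (2) *)
  ((forall x, MMs x <->
      mono_span rg sr sc P S Ss (fun mu nu => V (fpath_rg mu) /\ V (fpath_rg nu)) x)
   /\ is_ideal_of sc L MsM /\ (forall x, MMs x -> MsM x)) /\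
  (* (3) *)
  ((forall b m c, MMs b -> M m -> MsM c -> M (b * m) /\ M (m * c)) /\
   (forall c n b, MsM c -> Ms n -> MMs b -> Ms (c * n) /\ Ms (n * b))) /\
  (* (4) *)
  (forall (T : lmodType R) (t : A -> A -> T), is_tensor_product sc M Ms MsM t ->
   forall (T' : lmodType R) (t' : A -> A -> T'), is_tensor_product sc Ms M MMs t' ->
   exists (Psi : T -> A) (Phi : T' -> A),
     [/\ (* Psi : M (x)_{M*M} M* -> MM*, an R-linear MM*-bimodule map, Psi(m(x)n) = mn, onto *)
         [/\ forall x y, Psi (x + y) = Psi x + Psi y,
             forall a x, Psi (a *: x) = sc a (Psi x),
             forall m n, M m -> Ms n -> Psi (t m n) = m * n,
             forall x, MMs x <-> exists y, Psi y = x &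
             forall b m n, MMs b -> M m -> Ms n ->
               Psi (t (b * m) n) = b * Psi (t m n) /\ Psi (t m (n * b)) = Psi (t m n) * b],
         (* Phi : M* (x)_{MM*} M -> M*M, an R-linear M*M-bimodule map, Phi(n(x)m) = nm, onto *)
         [/\ forall x y, Phi (x + y) = Phi x + Phi y,
             forall a x, Phi (a *: x) = sc a (Phi x),
             forall n m, Ms n -> M m -> Phi (t' n m) = n * m,
             forall x, MsM x <-> exists y, Phi y = x &
             forall c n m, MsM c -> Ms n -> M m ->
               Phi (t' (c * n) m) = c * Phi (t' n m) /\ Phi (t' n (m * c)) = Phi (t' n m) * c],
         (* Morita context identities *)
         forall m m' n, M m -> M m' -> Ms n -> m * Phi (t' n m') = Psi (t m n) * m' &
         forall n n' m, Ms n -> Ms n' -> M m -> n * Psi (t m n') = Phi (t' n m) * n']).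
Proof.
move=> L M Ms MMs MsM.
split; first exact: MMs_subalgebra.
split; first by split; [exact: MMsE|split; [exact: MsM_ideal|exact: MMs_sub_MsM]].
split.
  by split=> ? ? ? ? ? ?; split; [apply: MMs_mul_M|apply: M_mul_MsM|
                                  apply: MsM_mul_Ms|apply: Ms_mul_MMs].
move=> T t ht T' t' ht'.
have [Psi [PsiD PsiZ Psi_t Psi_onto]] := tensor_mul_map hA ht.
have [Phi [PhiD PhiZ Phi_t Phi_onto]] := tensor_mul_map hA ht'.
exists Psi, Phi; split.
- split=> // b m n hb hm hn.
  by rewrite !Psi_t ?mulrA //; [apply: Ms_mul_MMs|apply: MMs_mul_M].
- split=> // c n m hc hn hm.
  by rewrite !Phi_t ?mulrA //; [apply: M_mul_MsM|apply: MsM_mul_Ms].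
- by move=> m m' n hm hm' hn; rewrite Phi_t // Psi_t // mulrA.
- by move=> n n' m hn hn' hm; rewrite Psi_t // Phi_t // mulrA.
Qed.
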